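(* Let $\Sigma\subset Z$ be a centred curve of bidegree $(k,k)$. If a point $(w,z)\in\Sigma$ is fixed by a nontrivial rotation of $H^3$ preserving $(0,0,1)$, then $w=z$.
   Context: $H^3$ is the upper half-space model; $\hat w=-1/\bar w$; $Z=\mathbb{P}^1\times\mathbb{P}^1\setminus\{\hat w=z\}$ is the space of oriented geodesics, $(w,z)$ the geodesic from $\hat w$ to $z$; isometries act on $Z$ through their action on endpoints. A curve given by $(-w)^k\langle q(\hat w),q(z)\rangle=0$ with $q(z)=\sum_j\sqrt{\binom kj}z^jv_j$, $v_j\in\mathbb{C}^{k+1}$, is centred if $\sum_j(2j-k)\|v_j\|^2=0$ and $\sum_j\sqrt{(j+1)(k-j)}\langle v_j,v_{j+1}\rangle=0$. *)

From HB Require Import structures.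
From mathcomp Require Import all_boot all_order all_algebra.
From mathcomp Require Import complex.
From mathcomp Require Import Rstruct.


Set Implicit Arguments.
Unset Strict Implicit.
Unset Printing Implicit Defensive.

Import Order.TTheory GRing.Theory Num.Theory.
Local Open Scope ring_scope.
Local Open Scope complex_scope.

Notation C := (Rdefinitions.R)[i].

(* Some x is the finite point x, None is ∞. *)
Definition P1 := option C.

(* homogeneous coordinates [z1 : z0] of a point (z = z1/z0) *)
Definition hc1 (p : P1) : C := if p is Some x then x else 1.
Definition hc0 (p : P1) : C := if p is Some _ then 1 else 0.

(* the antipodal map  w ↦ ŵ = -1/conj(w)  (0 ↦ ∞, ∞ ↦ 0) *)
Definition hat (p : P1) : P1 :=
  match p with
  | None => Some 0
  | Some x => if x == 0 then None else Some (- (x^*)^-1)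
  end.

(* Z = P^1 × P^1 minus {ŵ = z};  (w,z) = oriented geodesic from ŵ to z *)
Definition inZ (w z : P1) : Prop := hat w <> z.

(* H^3 = upper half space {(x, t) : x ∈ C, t ∈ R, t > 0}; an orientation-
   preserving isometry is (the Poincaré extension of) a matrix
   [[a, b], [c, d]] in SL(2, C).                                          *)
Record SL2C := mkSL2C { ga : C; gb : C; gc : C; gd : C;
                        gdet : ga * gd - gb * gc = 1 }.

Definition sqn (u : C) : Rdefinitions.R := complex.Re (u * u^*).

(* Poincaré extension: action on a point (x, t) of H^3 *)
Definition actH3 (g : SL2C) (p : C * Rdefinitions.R) : C * Rdefinitions.R :=
  let: (x, t) := p in
  let: D := sqn (gc g * x + gd g) + sqn (gc g) * t ^+ 2 in
  (((ga g * x + gb g) * (gc g * x + gd g)^* + ga g * (gc g)^* * (t ^+ 2)%:C)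
      / D%:C,
   t / D).

Definition actP1 (g : SL2C) (p : P1) : P1 :=
  match p with
  | Some x => if gc g * x + gd g == 0 then None
              else Some ((ga g * x + gb g) / (gc g * x + gd g))
  | None => if gc g == 0 then None else Some (ga g / gc g)
  end.

Definition centre : C * Rdefinitions.R := (0, 1).

Definition fixes_centre (g : SL2C) : Prop := actH3 g centre = centre.

Definition nontrivial (g : SL2C) : Prop :=
  exists x (t : Rdefinitions.R), 0 < t /\ actH3 g (x, t) <> (x, t).

(* action on Z through the endpoints: the geodesic from ŵ to z is sent
   to the geodesic from g ŵ to g z, i.e. to the point (hat (g ŵ), g z)
   (hat is an involution). *)
Definition actZ (g : SL2C) (wz : P1 * P1) : P1 * P1 :=
  (hat (actP1 g (hat wz.1)), actP1 g wz.2).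

Definition hdot (n : nat) (a b : 'rV[C]_n) : C :=
  \sum_(i < n) (a 0 i)^* * b 0 i.

Definition sqbin (k j : nat) : C := (Num.sqrt ('C(k, j)%:R : Rdefinitions.R))%:C.

Definition qpoly (k : nat) (v : nat -> 'rV[C]_k.+1) (z : C) : 'rV[C]_k.+1 :=
  \sum_(j < k.+1) (sqbin k j * z ^+ j) *: v j.

(* Expanding, for finite w, z:
     (-w)^k <q(ŵ), q(z)>
       = \sum_{j,l} sqrt(C(k,j)) sqrt(C(k,l)) (-1)^(k+j) w^(k-j) z^l <v_j,v_l>,
   a polynomial of bidegree (k,k).  Its bihomogenisation in the
   coordinates w = [w1:w0], z = [z1:z0] defines the curve in P^1 x P^1: *)
Definition curveF (k : nat) (v : nat -> 'rV[C]_k.+1) (w z : P1) : C :=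
  \sum_(j < k.+1) \sum_(l < k.+1)
     sqbin k j * sqbin k l * (-1) ^+ (k + j)
     * hc1 w ^+ (k - j) * hc0 w ^+ j * hc1 z ^+ l * hc0 z ^+ (k - l)
     * hdot (v j) (v l).

Definition onSigma (k : nat) (v : nat -> 'rV[C]_k.+1) (w z : P1) : Prop :=
  inZ w z /\ curveF v w z = 0.

Definition is_curve (k : nat) (v : nat -> 'rV[C]_k.+1) : Prop :=
  exists w z, curveF v w z <> 0.

Definition centred (k : nat) (v : nat -> 'rV[C]_k.+1) : Prop :=
  \sum_(j < k.+1) ((2 * j)%:R - k%:R) * hdot (v j) (v j) = 0
  /\ \sum_(j < k) (Num.sqrt ((j.+1 * (k - j))%N%:R : Rdefinitions.R))%:C
        * hdot (v j) (v j.+1) = 0.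

(* A rotation of H^3 about (0,0,1) is a matrix [[conj d, -conj c], [c, d]] of SU(2).  Its
   finite fixed points on the sphere at infinity are the roots of c x^2 + (d - conj d) x + conj c,
   a set preserved by the antipodal map x |-> -1/conj x, which itself has no fixed point.  A
   nontrivial rotation has at most two fixed points at infinity, so two distinct ones are
   antipodal.  The endpoints hat w and z of a fixed geodesic (w, z) are distinct fixed points,
   hence z = hat (hat w) = w. *)
From HB Require Import structures.
From mathcomp Require Import all_boot all_order all_algebra.
From mathcomp Require Import complex Rstruct.
From mathcomp Require Import ring.

Set Implicit Arguments.
Unset Strict Implicit.
Unset Printing Implicit Defensive.

Import Order.TTheory GRing.Theory Num.Theory.
Local Open Scope ring_scope.

Lemma quadratic_root_sum (R : idomainType) (a b c x y : R) :
  a * x ^+ 2 + b * x + c = 0 -> a * y ^+ 2 + b * y + c = 0 -> x != y ->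
  a * (x + y) + b = 0.
Proof.
move=> Qx Qy xy; have : (x - y) * (a * (x + y) + b) = 0.
  by rewrite -[RHS](subrr 0) -{1}Qx -Qy; ring.
by move/eqP; rewrite mulf_eq0 subr_eq0 (negbTE xy) => /eqP.
Qed.

Lemma quadratic_roots_eq (R : idomainType) (a b c x y z : R) : a != 0 ->
  a * x ^+ 2 + b * x + c = 0 -> a * y ^+ 2 + b * y + c = 0 ->
  a * z ^+ 2 + b * z + c = 0 -> x != y -> z != y -> x = z.
Proof.
move=> a0 Qx Qy Qz xy zy.
have : a * (x - z) = 0.
  rewrite -[RHS](subrr 0) -{1}(quadratic_root_sum Qx Qy xy).
  by rewrite -(quadratic_root_sum Qz Qy zy); ring.
by move/eqP; rewrite mulf_eq0 (negbTE a0) subr_eq0 => /eqP.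
Qed.

Section AntipodalRoots.

Variable R : numClosedFieldType.

Lemma antipode_neq (x : R) : x != 0 -> - (x^*)^-1 != x.
Proof.
move=> x0; apply/eqP => E.
have xx : x * x^* = -1 by rewrite -{1}E mulNr mulVf ?conjC_eq0.
by have := mul_conjC_ge0 x; rewrite xx ler0N1.
Qed.

Lemma antipode_root (c e x : R) : e^* = - e -> x != 0 ->
  c * x ^+ 2 + e * x + c^* = 0 ->
  c * (- (x^*)^-1) ^+ 2 + e * (- (x^*)^-1) + c^* = 0.
Proof.
move=> eN x0 Qx; set s := x^*; have s0 : s != 0 by rewrite conjC_eq0.
have Qs : c^* * s ^+ 2 - e * s + c = 0.
  have := congr1 Num.conj Qx; rewrite conjC0 => <-.
  by rewrite !rmorphD !rmorphM /= eN conjCK; ring.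
apply/(mulIf (expf_neq0 2 s0)); rewrite mul0r -[RHS]Qs.
by field.
Qed.

End AntipodalRoots.

Lemma mul_conjc_sqn (u : C) : u * u^* = (sqn u)%:C%C.
Proof.
case: u => a b; rewrite /sqn -[Num.conj _]/(conjc _) /=.
by apply/eqP; rewrite eq_complex /=; apply/andP; split; apply/eqP; ring.
Qed.

Lemma hatK : involutive hat.
Proof.
case=> [x|] /=; last by rewrite eqxx.
have [->|x0] := eqVneq x 0; first by [].
rewrite /= oppr_eq0 invr_eq0 conjc_eq0 (negbTE x0).
by rewrite rmorphN fmorphV /= conjCK invrN invrK opprK.
Qed.

Lemma fixes_centre_unitary (g : SL2C) : fixes_centre g ->
  [/\ ga g = (gd g)^*, gb g = - (gc g)^*
    & gc g * (gc g)^* + gd g * (gd g)^* = 1].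
Proof.
case: g => a b c d det; rewrite /fixes_centre /actH3 /centre /=.
case; rewrite !mulr0 !add0r expr1n !mulr1 mul1r => Hx Ht.
have D1 : sqn d + sqn c = 1.
  by move/(congr1 GRing.inv): Ht; rewrite invrK invr1.
rewrite D1 -[1%:C%C]/(1 : C) divr1 in Hx.
have S : c * c^* + d * d^* = 1 by rewrite !mul_conjc_sqn -rmorphD addrC D1.
have Ea : a - d^* = - a * (c * c^* + d * d^* - 1) + c * (b * d^* + a * c^*)
   + d^* * (a * d - b * c - 1) by ring.
have Eb : b + c^* = - b * (c * c^* + d * d^* - 1) + d * (b * d^* + a * c^*)
   - c^* * (a * d - b * c - 1) by ring.
rewrite S Hx det subrr !mulr0 oppr0 !addr0 in Ea Eb.
by split=> //; apply/eqP; rewrite -subr_eq0 ?opprK ?Ea ?Eb.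
Qed.

Lemma rotation_diag_nonreal (g : SL2C) : fixes_centre g -> nontrivial g ->
  gc g = 0 -> gd g != (gd g)^*.
Proof.
move=> /fixes_centre_unitary [Ea Eb S] [x [t [_ moved]]] c0; apply/eqP => dR.
apply: moved; move: Ea Eb S dR; case: g c0 => a b c d det /= -> -> ->.
rewrite conjC0 oppr0 mul0r add0r => S dR.
have d1 : sqn d = 1 by apply: (@complexI _ _ 1); rewrite -mul_conjc_sqn S.
have dd : d^* * d^* = 1 by rewrite -{1}dR.
rewrite /actH3 /= !mul0r !add0r addr0 d1 /sqn mul0r /= !mulr0 !mul0r !addr0 !divr1.
by rewrite mulrAC dd mul1r.
Qed.

Lemma actP1_fixed_finite (g : SL2C) (x : C) : fixes_centre g ->
  actP1 g (Some x) = Some x ->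
  gc g * x ^+ 2 + (gd g - (gd g)^*) * x + (gc g)^* = 0.
Proof.
move=> /fixes_centre_unitary [Ea Eb _] /=; case: eqP => // /eqP nz [E].
have -> : gc g * x ^+ 2 + (gd g - (gd g)^*) * x + (gc g)^*
   = x * (gc g * x + gd g) - (ga g * x + gb g) by rewrite Ea Eb; ring.
by rewrite -{1}E divfK // subrr.
Qed.

Lemma actP1_fixed_infty (g : SL2C) : actP1 g None = None -> gc g = 0.
Proof. by rewrite /=; case: eqP. Qed.

Lemma diag_rotation_fixed_finite (g : SL2C) (x : C) :
  fixes_centre g -> nontrivial g -> gc g = 0 ->
  actP1 g (Some x) = Some x -> x = 0.
Proof.
move=> rot nt c0 /(actP1_fixed_finite rot).
rewrite c0 conjC0 mul0r add0r addr0 => /eqP.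
by rewrite mulf_eq0 subr_eq0 (negbTE (rotation_diag_nonreal rot nt c0)) => /eqP.
Qed.

Lemma rotation_fixed_points_antipodal (g : SL2C) (u z : P1) :
  fixes_centre g -> nontrivial g ->
  actP1 g u = u -> actP1 g z = z -> u <> z -> hat u = z.
Proof.
move=> rot nt fu fz uz.
have [c0|c0] := eqVneq (gc g) 0.
  have fixed0 := diag_rotation_fixed_finite rot nt c0.
  case: u z fu fz uz => [x|] [y|] fu fz uz //=.
  - by rewrite (fixed0 _ fu) (fixed0 _ fz) in uz.
  - by rewrite (fixed0 _ fu) eqxx.
  - by rewrite (fixed0 _ fz).
case: u fu uz => [x|] fu uz; last by rewrite (actP1_fixed_infty fu) eqxx in c0.
case: z fz uz => [y|] fz uz; last by rewrite (actP1_fixed_infty fz) eqxx in c0.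
have xy : x != y by apply: contra_notN uz => /eqP ->.
have Qx := actP1_fixed_finite rot fu; have Qy := actP1_fixed_finite rot fz.
have x0 : x != 0.
  apply: contra_neq c0 => x0; move: Qx; rewrite x0 expr0n /= !mulr0 !add0r.
  by move/eqP; rewrite conjC_eq0 => /eqP.
have eN : (gd g - (gd g)^*)^* = - (gd g - (gd g)^*).
  by rewrite rmorphB /= conjCK opprB.
have QY := antipode_root eN x0 Qx.
rewrite /= (negbTE x0); congr Some.
have [//|Yy] := eqVneq (- (x^*)^-1) y.
by have := antipode_neq x0; rewrite -(quadratic_roots_eq c0 Qx Qy QY xy Yy) eqxx.
Qed.

Theorem mainTheorem6 (k : nat) (v : nat -> 'rV[C]_k.+1) :
  is_curve v -> centred v ->
  forall (g : SL2C), fixes_centre g -> nontrivial g ->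
  forall w z : P1, onSigma v w z -> actZ g (w, z) = (w, z) -> w = z.
Proof.
move=> _ _ g rot nt w z [wz _] [fw fz].
have fhw : actP1 g (hat w) = hat w by rewrite -{2}fw hatK.
by rewrite -(hatK w); exact: (rotation_fixed_points_antipodal rot nt fhw fz wz).
Qed.
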